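(* Assume $\inf_{x\in X}\mu(B_x(1/2))>0$. If $T\in\mathscr{E}(X)$ is a controlled operator, $\xi$ is a coarse filter on $X$, and $\lim_{x\to\xi}\|\mathbf{1}_{B_x(1)}T\|=0$, then $T\in\mathscr{J}_\xi(X)$.
   Context: $(X,d)$ is a non-compact proper metric space, $B_x(r)=\{y:d(x,y)\le r\}$, and $\mu$ is a Radon measure with support $X$ such that $\mu(B_x(r))>0$ and $\sup_x\mu(B_x(r))<\infty$ for all $r>0$. On $L^2(X,\mu)$, $\mathbf{1}_A$ is multiplication by the characteristic function of measurable $A$. An operator $T$ is controlled if there is $r>0$ such that $\mathbf{1}_FT\mathbf{1}_G=0$ for all closed $F,G$ with $d(F,G)>r$. A kernel $k$ on $X\times X$ is controlled if $k(x,y)=0$ whenever $d(x,y)>r$ for some $r$; $\mathscr{E}(X)$ is the norm closure of the operators $(Op(k)f)(x)=\int k(x,y)f(y)d\mu(y)$, $k$ bounded, uniformly continuous and controlled. For a filter $\xi$, $\lim_{x\to\xi}f(x)=0$ means $\{x:|f(x)|<\varepsilon\}\in\xi$ for all $\varepsilon>0$. With $F^{(r)}=\{x:\inf_{y\notin F}d(x,y)>r\}$, $\xi$ is coarse if $F\in\xi\Rightarrow F^{(r)}\in\xi$ for all $r>0$. $\mathscr{J}_\xi(X)=\{T\in\mathscr{E}(X):\inf_F\|\mathbf{1}_FT\|=0\}$, infimum over measurable $F\in\xi$. *)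

(* Operators on the complex Hilbert space L^2(X,mu)
   are modelled as maps on complex-valued functions (representatives),
   required to preserve L^2, respect mu-a.e. equality, be linear (a.e.) and
   bounded; operator identities are understood mu-a.e. on L^2 inputs. *)
From mathcomp Require Import all_boot all_order all_algebra.
From mathcomp Require Import all_classical all_reals all_analysis.
From mathcomp Require Import complex.
Import Order.TTheory GRing.Theory Num.Theory.

Set Implicit Arguments.
Unset Strict Implicit.
Unset Printing Implicit Defensive.

Local Open Scope classical_set_scope.
Local Open Scope ring_scope.

Definition csq (R : realType) (z : R[i]) : R :=
  complex.Re z ^+ 2 + complex.Im z ^+ 2.
Definition cabs (R : realType) (z : R[i]) : R := Num.sqrt (csq z).

Definition is_metric (X : Type) (R : realType) (d : X -> X -> R) : Prop :=
  (forall x, d x x = 0) /\ (forall x y, d x y = 0 -> x = y) /\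
  (forall x y, d x y = d y x) /\ (forall x y z, d x z <= d x y + d y z).

Definition cball (X : Type) (R : realType) (d : X -> X -> R) (x : X) (r : R)
  : set X := [set y | d x y <= r].

Definition mopen (X : Type) (R : realType) (d : X -> X -> R) (U : set X) : Prop :=
  forall x, U x -> exists2 r : R, 0 < r & [set y | d x y < r] `<=` U.

Definition mclosed (X : Type) (R : realType) (d : X -> X -> R) (F : set X) : Prop :=
  mopen d (~` F).

Definition mcompact (X : Type) (R : realType) (d : X -> X -> R) (K : set X) : Prop :=
  forall (I : Type) (U : I -> set X), (forall i, mopen d (U i)) ->
    K `<=` \bigcup_i U i ->
    exists J : set I, finite_set J /\ K `<=` \bigcup_(i in J) U i.

(* d(F,G) > r, with d(F,G) = inf_{x in F, y in G} d(x,y) (= +oo if empty) *)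
Definition dist_gt (X : Type) (R : realType) (d : X -> X -> R)
  (F G : set X) (r : R) : Prop :=
  exists2 s : R, r < s & forall x y, F x -> G y -> s <= d x y.

(* F^(r) = {x | inf_{y notin F} d(x,y) > r} *)
Definition inner_nbhd (X : Type) (R : realType) (d : X -> X -> R)
  (F : set X) (r : R) : set X :=
  [set x | exists2 s : R, r < s & forall y, ~ F y -> s <= d x y].

Definition standing_assumptions (dsp : measure_display) (X : measurableType dsp)
  (R : realType) (d : X -> X -> R) (mu : {measure set X -> \bar R}) : Prop :=
  [/\ is_metric d,
      (forall A : set X, measurable A <-> smallest (sigma_algebra setT) (mopen d) A),
      (forall x r, mcompact d (cball d x r)) /\
      ~ mcompact d setT,
      [/\ (forall x, exists U, [/\ mopen d U, U x & (mu U < +oo)%E]),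
          (forall A, measurable A ->
             mu A = ereal_inf [set mu U | U in [set U | mopen d U /\ A `<=` U]]) &
          (forall U, mopen d U ->
             mu U = ereal_sup [set mu K | K in [set K | mcompact d K /\ K `<=` U]])] /\
      (forall U, mopen d U -> U !=set0 -> (0 < mu U)%E) &
      (forall r : R, 0 < r ->
         (forall x, (0 < mu (cball d x r))%E) /\
         exists M : R, forall x, (mu (cball d x r) <= M%:E)%E)].

Section L2.
Context (dsp : measure_display) (X : measurableType dsp) (R : realType)
        (mu : {measure set X -> \bar R}).

Definition cmeas (f : X -> R[i]) : Prop :=
  measurable_fun setT (fun x => complex.Re (f x)) /\
  measurable_fun setT (fun x => complex.Im (f x)).

Definition L2 (f : X -> R[i]) : Prop :=
  cmeas f /\ (\int[mu]_x (csq (f x))%:E < +oo)%E.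

Definition norm2 (f : X -> R[i]) : R :=
  Num.sqrt (fine (\int[mu]_x (csq (f x))%:E)).

Definition ae_eq (f g : X -> R[i]) : Prop := {ae mu, forall x, f x = g x}.

Definition is_bounded_op (T : (X -> R[i]) -> (X -> R[i])) : Prop :=
  [/\ (forall f, L2 f -> L2 (T f)),
      (forall f g, L2 f -> L2 g -> ae_eq f g -> ae_eq (T f) (T g)),
      (forall (a : R[i]) f g, L2 f -> L2 g ->
         ae_eq (T (fun x => a * f x + g x)) (fun x => a * T f x + T g x)) &
      exists M : R, forall f, L2 f -> norm2 (T f) <= M * norm2 f].

Definition opnorm (T : (X -> R[i]) -> (X -> R[i])) : R :=
  sup [set norm2 (T f) | f in [set f | L2 f /\ norm2 f <= 1]].

Definition ind (A : set X) (f : X -> R[i]) : X -> R[i] :=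
  fun x => if `[< A x >] then f x else 0.

Definition opsub (T S : (X -> R[i]) -> (X -> R[i])) : (X -> R[i]) -> (X -> R[i]) :=
  fun f x => T f x - S f x.

Definition cint (g : X -> R[i]) : R[i] :=
  complex.Complex (Rintegral mu setT (fun y => complex.Re (g y)))
                  (Rintegral mu setT (fun y => complex.Im (g y))).

Definition Op (k : X -> X -> R[i]) : (X -> R[i]) -> (X -> R[i]) :=
  fun f x => cint (fun y => k x y * f y).

Variable d : X -> X -> R.

Definition good_kernel (k : X -> X -> R[i]) : Prop :=
  [/\ (exists M : R, forall x y, cabs (k x y) <= M),
      (forall e : R, 0 < e -> exists2 del : R, 0 < del &
         forall x y x' y', d x x' < del -> d y y' < del ->
           cabs (k x y - k x' y') < e) &
      (exists r : R, forall x y, r < d x y -> k x y = 0)].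

(* the algebra E(X): norm closure of {Op k | k good} *)
Definition in_E (T : (X -> R[i]) -> (X -> R[i])) : Prop :=
  is_bounded_op T /\
  forall e : R, 0 < e -> exists k, good_kernel k /\ opnorm (opsub T (Op k)) < e.

Definition controlled_op (T : (X -> R[i]) -> (X -> R[i])) : Prop :=
  exists2 r : R, 0 < r &
    forall F G : set X, mclosed d F -> mclosed d G -> dist_gt d F G r ->
      forall f, L2 f -> ae_eq (ind F (T (ind G f))) (fun _ => 0).

Definition coarse_filter (xi : set_system X) : Prop :=
  Filter xi /\ forall (F : set X) (r : R), 0 < r -> xi F -> xi (inner_nbhd d F r).

Definition in_J (xi : set_system X) (T : (X -> R[i]) -> (X -> R[i])) : Prop :=
  in_E T /\
  forall e : R, 0 < e -> exists F : set X,
    [/\ measurable F, xi F & opnorm (fun f => ind F (T f)) < e].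

End L2.

(* Given [e > 0], the limit hypothesis and the coarseness of [xi] put in [xi]
   the set [F] of points [y] such that every [x] with [d x y <= 1] satisfies
   [||1_(B_x(1)) T|| < eps].  As [T] has propagation [r], [1_(B_x(1)) T f]
   only sees [f] on [B_x(r + 2)], so [int_(B_x(1)) |T f|^2 <= eps^2
   int_(B_x(r+2)) |f|^2] whenever [x] is within [1/2] of [F].  Integrating
   this over [x] and exchanging the order of integration, the bounds
   [mu (B_y(1/2)) >= c] and [mu (B_y(r+2)) <= M] give
   [c ||1_F T f||^2 <= eps^2 M ||f||^2], i.e. [||1_F T|| <= e/2] for a
   suitable [eps]. *)

From HB Require Import structures.
From Pilot Require Import Defs.
From mathcomp Require Import all_boot all_order all_algebra.
From mathcomp Require Import all_classical all_reals all_analysis.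
From mathcomp Require Import complex measurable_realfun.
From mathcomp Require Import ring lra.
Import Order.TTheory GRing.Theory Num.Theory.
Local Open Scope classical_set_scope.
Local Open Scope ring_scope.

Set Implicit Arguments.
Unset Strict Implicit.

Section metric.
Context (X : Type) (R : realType) (d : X -> X -> R) (hd : is_metric d).

Lemma dist_xx x : d x x = 0. Proof. by case: hd. Qed.
Lemma distC x y : d x y = d y x. Proof. by case: hd => _ [_ []]. Qed.
Lemma dist_triangle x y z : d x z <= d x y + d y z.
Proof. by case: hd => _ [_ [_]]. Qed.

Lemma mopen_ball x r : mopen d [set y | d x y < r].
Proof.
move=> y /= hy; exists (r - d x y); first by rewrite subr_gt0.
by move=> z /= hz; have := dist_triangle x y z; lra.
Qed.

Lemma mopen_far x r : mopen d [set y | r < d x y].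
Proof.
move=> y /= hy; exists (d x y - r); first by rewrite subr_gt0.
by move=> z /= hz; have := dist_triangle x z y; rewrite (distC z y); lra.
Qed.

Lemma mclosed_cball x r : mclosed d (cball d x r).
Proof.
rewrite /mclosed (_ : ~` _ = [set y | r < d x y]); first exact: mopen_far.
by apply/seteqP; split => y /=; rewrite /cball /= ltNge => /negP.
Qed.

Lemma mclosed_far x r : mclosed d [set y | r <= d x y].
Proof.
rewrite /mclosed (_ : ~` _ = [set y | d x y < r]); first exact: mopen_ball.
by apply/seteqP; split => y /=; rewrite ltNge => /negP.
Qed.

Lemma mopen_inner_nbhd F r : mopen d (inner_nbhd d F r).
Proof.
move=> x [s rs hs]; exists ((s - r) / 2); first by rewrite divr_gt0 // subr_gt0.
move=> z /= hz; exists (s - (s - r) / 2); first lra.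
by move=> y Fy; have := hs y Fy; have := dist_triangle x z y; lra.
Qed.

Lemma inner_nbhd_cball F r x y : inner_nbhd d F r y -> d x y <= r -> F x.
Proof.
move=> [s rs hs] dxy; apply: contrapT => nFx.
by have := hs x nFx; rewrite (distC y x); lra.
Qed.

End metric.

Lemma le_of_lt_add_inv (R : realType) (t a : R) :
  (forall k : nat, t < a + 2 * k.+1%:R^-1) -> t <= a.
Proof.
move=> h; rewrite leNgt; apply/negP => at_.
have [k hk] : exists k : nat, 0 + k.+1%:R^-1 < (t - a) / 2.
  by apply: ltr_add_invr; rewrite divr_gt0 // subr_gt0.
by have := h k; move: (k.+1%:R^-1) hk => w; lra.
Qed.

Section standing.
Context (dsp : measure_display) (X : measurableType dsp) (R : realType)
  (d : X -> X -> R) (mu : {measure set X -> \bar R})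
  (hS : standing_assumptions d mu).

Lemma standing_metric : is_metric d. Proof. by case: hS. Qed.
Let hd := standing_metric.

Lemma mopen_measurable U : mopen d U -> measurable U.
Proof. by case: hS => _ hB _ _ _ hU; apply/hB => S [_]; apply. Qed.

Lemma mclosed_measurable F : mclosed d F -> measurable F.
Proof. by move=> /mopen_measurable /measurableC; rewrite setCK. Qed.

Lemma cball_measurable x r : measurable (cball d x r).
Proof. exact/mclosed_measurable/mclosed_cball. Qed.

Lemma cball_measure_bounded (r : R) : 0 < r ->
  exists2 M : R, 0 < M & forall x, (mu (cball d x r) <= M%:E)%E.
Proof.
case: hS => _ _ _ _ /(_ r) hr /hr [_ [M hM]]; exists (Num.max M 1).
  by rewrite lt_max ltr01 orbT.
by move=> x; apply: le_trans (hM x) _; rewrite lee_fin le_max lexx.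
Qed.

Lemma standing_sigma_finite : sigma_finite setT mu.
Proof.
exists (fun n => cball d point n.+1%:R).
  apply/seteqP; split => // y _; exists (Num.Def.trunc (d point y)) => //.
  by rewrite /cball /=; apply: ltW; exact: truncnS_gt.
move=> n; split; first exact: cball_measurable.
have [M _ hM] := @cball_measure_bounded n.+1%:R (ltr0Sn R n).
exact: le_lt_trans (hM _) (ltry _).
Qed.

(* Properness makes [X] separable: the band [d x y <= a] is a countable
   intersection of countable unions of products of small balls centred at
   finite nets of the compact balls [cball d point m]. *)
Lemma measurable_dist_le (a : R) : measurable [set z : X * X | d z.1 z.2 <= a].
Proof.
have /choice [J hJ] : forall mk : nat * nat, exists J : set X, finite_set J /\
    cball d point mk.1%:R `<=` \bigcup_(z in J) [set y | d z y < mk.2.+1%:R^-1].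
  move=> [m k]; case: hS => _ _ [hc _] _ _.
  apply: (hc point m%:R X (fun z => [set y | d z y < k.+1%:R^-1])).
    by move=> z; exact: mopen_ball.
  by move=> y _; exists y => //=; rewrite dist_xx // invr_gt0 ltr0Sn.
have -> : [set z : X * X | d z.1 z.2 <= a] =
  \bigcap_(k in setT) \bigcup_(m in setT) \bigcup_(z in J (m, k))
     ([set x | d z x < k.+1%:R^-1] `*` [set y | d z y < a + k.+1%:R^-1]).
  apply/seteqP; split => [[x y] /= hxy k _|[x y] /= h].
    pose m := (Num.Def.trunc (d point x)).+1.
    have hx : cball d point m%:R x by apply: ltW; exact: truncnS_gt.
    exists m => //; have [_ /(_ x hx) [z Jz /= hz]] := hJ (m, k).
    exists z => //; split => //=.
    by have := dist_triangle hd z x y; move: (k.+1%:R^-1) hz => w; lra.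
  apply: le_of_lt_add_inv => k; have [m _ [z _ [/= h1 h2]]] := h k I.
  have := dist_triangle hd x z y; rewrite (distC hd x z).
  by move: (k.+1%:R^-1) h1 h2 => w; lra.
apply: bigcapT_measurable => k; apply: bigcupT_measurable => m.
apply: fin_bigcup_measurable; first by case: (hJ (m, k)).
by move=> z _; apply: measurableX; apply: mopen_measurable; exact: mopen_ball.
Qed.

End standing.

(* [mu] is only a [measure]; this alias of it carries the sigma-finite
   structure needed by the Fubini-Tonelli theorems. *)
Section sigma_finite_alias.
Context (dsp : measure_display) (X : measurableType dsp) (R : realType)
  (mu : {measure set X -> \bar R}) (hmu : sigma_finite setT mu).
Definition sfmeasure (_ : sigma_finite setT mu) : set X -> \bar R := mu.
HB.instance Definition _ := Measure.copy (sfmeasure hmu) mu.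
HB.instance Definition _ := @Measure_isSigmaFinite.Build _ _ _ (sfmeasure hmu) hmu.
End sigma_finite_alias.

Section ball_averaging.
Context (dsp : measure_display) (X : measurableType dsp) (R : realType)
  (d : X -> X -> R) (mu : {measure set X -> \bar R})
  (hS : standing_assumptions d mu).
Let hd := standing_metric hS.
Let nu : {sigma_finite_measure set X -> \bar R} :=
  @sfmeasure _ _ _ mu (standing_sigma_finite hS).
Local Open Scope ereal_scope.

Lemma integral_indicM (A : set X) (k : \bar R) : measurable A -> 0 <= k ->
  \int[mu]_x ((\1_A x : R)%:E * k) = mu A * k.
Proof.
move=> mA k0; rewrite ge0_integralZr //; last first.
  by apply/measurable_EFinP; exact: measurable_indic.
by rewrite integral_indic // setIT.
Qed.

Section cball_kernel.
Variables (a : R) (g : X -> \bar R).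
Hypotheses (mg : measurable_fun setT g) (g0 : forall y, 0 <= g y).

Let k (z : X * X) := (\1_[set z : X * X | (d z.1 z.2 <= a)%R] z : R)%:E * g z.2.

Let mk : measurable_fun setT k.
Proof.
apply: emeasurable_funM.
  have mE := measurable_dist_le hS a.
  by apply/measurable_EFinP; exact: measurable_indic.
exact: measurableT_comp mg measurable_snd.
Qed.

Let k0 z : 0 <= k z. Proof. by rewrite mule_ge0 // lee_fin. Qed.

Lemma measurable_integral_cball :
  measurable_fun setT (fun x => \int[mu]_z ((\1_(cball d x a) z : R)%:E * g z)).
Proof. exact: (@measurable_fun_fubini_tonelli_F _ _ _ _ _ nu k mk k0). Qed.

Let integral_kE y : \int[mu]_x k (x, y) = mu (cball d y a) * g y.
Proof.
rewrite -integral_indicM //; last exact: (cball_measurable hS _ _).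
apply: eq_integral => x _; congr (_%:E * _); rewrite /indic; congr (_ : bool)%:R.
by apply/idP/idP => /set_mem h; apply/mem_set; move: h; rewrite /cball /= distC.
Qed.

Lemma measurable_cball_measureM :
  measurable_fun setT (fun y => mu (cball d y a) * g y).
Proof.
rewrite (_ : (fun y => _) = fubini_G nu k); last by apply/funext => y; rewrite -integral_kE.
exact: (@measurable_fun_fubini_tonelli_G _ _ _ _ _ nu k mk k0).
Qed.

Lemma integral_cball_swap :
  \int[mu]_x \int[mu]_z ((\1_(cball d x a) z : R)%:E * g z) =
  \int[mu]_y (mu (cball d y a) * g y).
Proof.
rewrite (sfinite_Fubini nu nu k k0 mk) /=.
by apply: eq_integral => y _; exact: integral_kE.
Qed.

End cball_kernel.

Lemma integral_half_cball_le (eps2 rho : R) (G H : X -> \bar R) (F : set X) x :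
  (0 <= eps2)%R -> measurable F -> measurable_fun setT G ->
  (forall y, 0 <= G y) -> (forall y, 0 <= H y) ->
  (forall x y, F y -> (d x y <= 1/2)%R ->
     \int[mu]_z ((\1_(cball d x 1) z : R)%:E * G z) <=
     eps2%:E * \int[mu]_z ((\1_(cball d x rho) z : R)%:E * H z)) ->
  \int[mu]_z ((\1_(cball d x (1/2)) z : R)%:E * ((\1_F z : R)%:E * G z)) <=
  eps2%:E * \int[mu]_z ((\1_(cball d x rho) z : R)%:E * H z).
Proof.
move=> e0 mF mG G0 H0 hyp.
case: (pselect (exists y, F y /\ (d x y <= 1/2)%R)) => [[y [Fy dxy]]|hno].
  apply: le_trans (hyp x y Fy dxy); apply: ge0_le_integral => //.
  - by move=> z _; rewrite !mule_ge0 // lee_fin.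
  - apply: emeasurable_funM.
      exact/measurable_EFinP/measurable_indic/(cball_measurable hS _ _).
    apply: emeasurable_funM => //; exact/measurable_EFinP/measurable_indic.
  - apply: emeasurable_funM => //.
    by apply/measurable_EFinP/measurable_indic/(cball_measurable hS _ _).
  move=> z _; rewrite /indic; case: (boolP (z \in cball d x (1/2))) => h /=.
    rewrite (mem_set (_ : cball d x 1 z)) ?mul1e.
      by case: (z \in F); rewrite /= ?mul1e ?mul0e.
    by move: h; rewrite inE /cball /=; lra.
  by rewrite mul0e mule_ge0 // lee_fin.
rewrite integral0_eq => [|z _].
  by rewrite mule_ge0 ?lee_fin //; apply: integral_ge0 => z _; rewrite mule_ge0 // lee_fin.
rewrite /indic; case: (boolP (z \in cball d x (1/2))) => h1 /=; first last.
  by rewrite mul0e.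
case: (boolP (z \in F)) => h2 /=; last by rewrite mul0e mule0.
by exfalso; apply: hno; exists z; split; [move: h2|move: h1]; rewrite inE.
Qed.

(* Double counting over the pairs [(x, y)] with [d x y <= 1/2], [y] in [F]:
   every such [y] has measure at least [c] of such [x], and every [x] sees
   [H] through the ball [cball d x rho], which has measure at most [M]. *)
Lemma ball_averaging (c M eps2 rho : R) (G H : X -> \bar R) (F : set X) :
  (0 <= c)%R -> (forall y, c%:E <= mu (cball d y (1/2))) ->
  (forall y, mu (cball d y rho) <= M%:E) -> (0 <= eps2)%R ->
  measurable F -> measurable_fun setT G -> measurable_fun setT H ->
  (forall y, 0 <= G y) -> (forall y, 0 <= H y) ->
  (forall x y, F y -> (d x y <= 1/2)%R ->
     \int[mu]_z ((\1_(cball d x 1) z : R)%:E * G z) <=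
     eps2%:E * \int[mu]_z ((\1_(cball d x rho) z : R)%:E * H z)) ->
  c%:E * \int[mu]_y ((\1_F y : R)%:E * G y) <= (eps2 * M)%:E * \int[mu]_y H y.
Proof.
move=> c0 hc hM e0 mF mG mH G0 H0 hyp.
have M0 : (0 <= M)%R by rewrite -lee_fin; apply: le_trans (hM point).
have FG0 y : 0 <= (\1_F y : R)%:E * G y by rewrite mule_ge0 // lee_fin.
have mFG : measurable_fun setT (fun y => (\1_F y : R)%:E * G y).
  by apply: emeasurable_funM => //; exact/measurable_EFinP/measurable_indic.
apply: (@le_trans _ _ (\int[mu]_y (mu (cball d y (1/2)) * ((\1_F y : R)%:E * G y)))).
  rewrite -ge0_integralZl_EFin //; apply: ge0_le_integral => //.
  - by move=> y _; rewrite mule_ge0 // lee_fin.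
  - exact: measurable_funeM.
  - exact: measurable_cball_measureM.
  by move=> y _; exact: lee_wpmul2r.
rewrite -integral_cball_swap //.
apply: (@le_trans _ _ (\int[mu]_x (eps2%:E * \int[mu]_z ((\1_(cball d x rho) z : R)%:E * H z)))).
  apply: ge0_le_integral => //.
  - by move=> x _; apply: integral_ge0 => z _; rewrite mule_ge0 // lee_fin.
  - exact: measurable_integral_cball.
  - exact/measurable_funeM/measurable_integral_cball.
  by move=> x _; exact: integral_half_cball_le.
rewrite ge0_integralZl_EFin //; last exact: measurable_integral_cball.
  rewrite integral_cball_swap // EFinM -muleA; apply: lee_wpmul2l; first by rewrite lee_fin.
  rewrite -ge0_integralZl_EFin //; apply: ge0_le_integral => //.
  - by move=> y _; rewrite mule_ge0.
  - exact: measurable_cball_measureM.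
  - exact: measurable_funeM.
  by move=> y _; exact: lee_wpmul2r.
by move=> x _; apply: integral_ge0 => z _; rewrite mule_ge0 // lee_fin.
Qed.

End ball_averaging.

Section complex_square.
Context (R : realType).

Lemma csq_ge0 (z : R[i]) : 0 <= csq z.
Proof. by rewrite /csq addr_ge0 // sqr_ge0. Qed.

Lemma csq0 : csq (0 : R[i]) = 0.
Proof. by rewrite /csq /= expr0n /= addr0. Qed.

Lemma csq_scale (a : R) (z : R[i]) : csq (Complex a 0 * z) = a ^+ 2 * csq z.
Proof. by case: z => x y; rewrite /csq /=; ring. Qed.

Lemma Re_scale (a : R) (z : R[i]) : complex.Re (Complex a 0 * z) = a * complex.Re z.
Proof. by case: z => x y /=; ring. Qed.

Lemma Im_scale (a : R) (z : R[i]) : complex.Im (Complex a 0 * z) = a * complex.Im z.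
Proof. by case: z => x y /=; ring. Qed.

End complex_square.

Section L2_space.
Context (dsp : measure_display) (X : measurableType dsp) (R : realType)
  (mu : {measure set X -> \bar R}).
Local Notation I2 f := (\int[mu]_y (csq (f y))%:E)%E.

Lemma indE (A : set X) (f : X -> R[i]) x : ind A f x = if x \in A then f x else 0.
Proof. by []. Qed.

Lemma csq_ind (A : set X) (f : X -> R[i]) x : csq (ind A f x) = \1_A x * csq (f x).
Proof. by rewrite indE /indic; case: (x \in A); rewrite ?mul1r ?mul0r ?csq0. Qed.

Lemma cmeas_ind (A : set X) (f : X -> R[i]) : measurable A -> cmeas f -> cmeas (ind A f).
Proof.
have indM (h : R[i] -> R) : h 0 = 0 -> (fun x => h (ind A f x)) = \1_A \* (h \o f).
  by move=> h0; apply/funext => x; rewrite indE /indic /=; case: (x \in A); rewrite ?mul1r ?mul0r.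
move=> mA [mRe mIm]; split; rewrite indM //;
  by apply: measurable_funM => //; exact: measurable_indic.
Qed.

Lemma cmeas_scale (a : R) (f : X -> R[i]) : cmeas f -> cmeas (fun x => Complex a 0 * f x).
Proof.
move=> [mRe mIm]; split.
  by under eq_fun do rewrite Re_scale; exact: measurable_funM.
by under eq_fun do rewrite Im_scale; exact: measurable_funM.
Qed.

Lemma measurable_csq (f : X -> R[i]) : cmeas f -> measurable_fun setT (fun y => (csq (f y))%:E).
Proof.
by move=> [mRe mIm]; apply/measurable_EFinP; apply: measurable_funD; exact: measurable_funX.
Qed.

Lemma I2_ge0 (f : X -> R[i]) : (0 <= I2 f)%E.
Proof. by apply: integral_ge0 => y _; rewrite lee_fin csq_ge0. Qed.

Lemma I2_ind (A : set X) (f : X -> R[i]) :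
  I2 (ind A f) = (\int[mu]_y ((\1_A y)%:E * (csq (f y))%:E))%E.
Proof. by apply: eq_integral => y _; rewrite csq_ind EFinM. Qed.

Lemma I2_ind_le (A : set X) (f : X -> R[i]) : measurable A -> cmeas f -> (I2 (ind A f) <= I2 f)%E.
Proof.
move=> mA cf; apply: ge0_le_integral => //.
- by move=> y _; rewrite lee_fin csq_ge0.
- exact/measurable_csq/cmeas_ind.
- exact: measurable_csq.
by move=> y _; rewrite lee_fin csq_ind /indic; case: (y \in A); rewrite ?mul1r ?mul0r ?csq_ge0.
Qed.

Lemma I2_scale (a : R) (f : X -> R[i]) : cmeas f ->
  I2 (fun x => Complex a 0 * f x) = ((a ^+ 2)%:E * I2 f)%E.
Proof.
move=> cf; rewrite -ge0_integralZl_EFin ?sqr_ge0 //.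
- by apply: eq_integral => y _; rewrite csq_scale EFinM.
- by move=> y _; rewrite lee_fin csq_ge0.
- exact: measurable_csq.
Qed.

Lemma I2_ae_eq (f g : X -> R[i]) : cmeas f -> cmeas g -> Defs.ae_eq mu f g -> I2 f = I2 g.
Proof.
move=> cf cg h; apply: ae_eq_integral => //; try exact: measurable_csq.
by apply: filterS h => x /= -> _.
Qed.

Lemma L2_ind (A : set X) (f : X -> R[i]) : measurable A -> L2 mu f -> L2 mu (ind A f).
Proof.
move=> mA [cf hf]; split; first exact: cmeas_ind.
by apply: le_lt_trans hf; exact: I2_ind_le.
Qed.

Lemma L2_scale (a : R) (f : X -> R[i]) : L2 mu f -> L2 mu (fun x => Complex a 0 * f x).
Proof.
move=> [cf hf]; split; first exact: cmeas_scale.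
rewrite I2_scale //; have := I2_ge0 f.
by move: hf; case: (I2 f) => //= r _ _; rewrite -EFinM ltry.
Qed.

Lemma I2_0 : I2 (fun _ : X => (0 : R[i])) = 0%E.
Proof. by under eq_fun do rewrite csq0; rewrite integral0. Qed.

Lemma L2_0 : L2 mu (fun _ : X => (0 : R[i])).
Proof. by split; [split; exact: measurable_cst | rewrite I2_0 ltry]. Qed.

Lemma I2_fin (f : X -> R[i]) : L2 mu f -> I2 f = (fine (I2 f))%:E.
Proof.
move=> [_ hf]; rewrite fineK // fin_numElt hf andbT.
exact: lt_le_trans (ltNyr 0) (I2_ge0 f).
Qed.

Lemma fine_I2_ge0 (f : X -> R[i]) : 0 <= fine (I2 f).
Proof. exact/fine_ge0/I2_ge0. Qed.

Lemma norm2_ge0 (f : X -> R[i]) : 0 <= norm2 mu f.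
Proof. exact: sqrtr_ge0. Qed.

Lemma norm2_sq (f : X -> R[i]) : norm2 mu f ^+ 2 = fine (I2 f).
Proof. by rewrite /norm2 sqr_sqrtr // fine_I2_ge0. Qed.

Lemma norm2_0 : norm2 mu (fun _ : X => (0 : R[i])) = 0.
Proof. by rewrite /norm2 I2_0 sqrtr0. Qed.

Lemma norm2_le (a : R) (f : X -> R[i]) : 0 <= a -> fine (I2 f) <= a ^+ 2 -> norm2 mu f <= a.
Proof. by move=> a0 h; rewrite /norm2 -(ger0_norm a0) -sqrtr_sqr ler_sqrt // sqr_ge0. Qed.

Lemma norm2_ind_le (A : set X) (f : X -> R[i]) : measurable A -> L2 mu f ->
  norm2 mu (ind A f) <= norm2 mu f.
Proof.
move=> mA Lf; rewrite /norm2 ler_sqrt ?fine_I2_ge0 //.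
by have := I2_ind_le mA Lf.1; rewrite (I2_fin (L2_ind mA Lf)) (I2_fin Lf) lee_fin.
Qed.

Lemma norm2_le_opnorm (S : (X -> R[i]) -> (X -> R[i])) (f : X -> R[i]) :
  (exists B, forall f, L2 mu f -> norm2 mu f <= 1 -> norm2 mu (S f) <= B) ->
  L2 mu f -> norm2 mu f <= 1 -> norm2 mu (S f) <= opnorm mu S.
Proof.
move=> [B hB] Lf f1; apply: ub_le_sup; last by exists f.
by exists B => _ [g [Lg g1] <-]; exact: hB.
Qed.

Lemma opnorm_le (S : (X -> R[i]) -> (X -> R[i])) (a : R) :
  (forall f, L2 mu f -> norm2 mu f <= 1 -> norm2 mu (S f) <= a) -> opnorm mu S <= a.
Proof.
move=> hS; apply: ge_sup; last by move=> _ [f [Lf f1] <-]; exact: hS.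
exists (norm2 mu (S (fun=> 0))), (fun=> 0) => //.
by split; [exact: L2_0 | rewrite norm2_0].
Qed.

(* Rescale [h] by [(||h||^2 + t)^(-1/2)] with [t > 0]: the extra [t] avoids
   dividing by zero when [h] is null. *)
Lemma I2_le_opnorm (S : (X -> R[i]) -> (X -> R[i])) (eps : R) :
  (forall f, L2 mu f -> L2 mu (S f)) ->
  (exists B, forall f, L2 mu f -> norm2 mu f <= 1 -> norm2 mu (S f) <= B) ->
  (forall (a : R) f, L2 mu f ->
     Defs.ae_eq mu (S (fun x => Complex a 0 * f x)) (fun x => Complex a 0 * S f x)) ->
  opnorm mu S < eps -> forall h, L2 mu h -> fine (I2 (S h)) <= eps ^+ 2 * fine (I2 h).
Proof.
move=> SL2 Sbd Sscale hop.
have unit_ball f : L2 mu f -> fine (I2 f) <= 1 -> fine (I2 (S f)) < eps ^+ 2.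
  move=> Lf If; have f1 : norm2 mu f <= 1 by apply: norm2_le; rewrite ?expr1n.
  move: (norm2_le_opnorm Sbd Lf f1) => /le_lt_trans /(_ hop) hlt; rewrite -norm2_sq.
  by have := norm2_ge0 (S f); move: (norm2 mu (S f)) hlt => v; nra.
have eps0 : 0 < eps.
  apply: le_lt_trans hop; apply: le_trans (norm2_ge0 (S (fun=> 0))) _.
  by apply: norm2_le_opnorm Sbd L2_0 _; rewrite norm2_0.
move=> h Lh; apply/ler_addgt0Pr => t t0.
have e20 : 0 < eps ^+ 2 by rewrite exprn_gt0.
have te : 0 < t / eps ^+ 2 by rewrite divr_gt0.
pose lam := fine (I2 h) + t / eps ^+ 2.
have lam0 : 0 < lam by rewrite /lam; have := fine_I2_ge0 h; lra.
pose a := (Num.sqrt lam)^-1.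
have a2 : a ^+ 2 = lam^-1 by rewrite /a exprVn sqr_sqrtr // ltW.
have Lah := L2_scale a Lh.
have Iah : fine (I2 (fun x => Complex a 0 * h x)) <= 1.
  rewrite I2_scale; last exact: Lh.1.
  rewrite (I2_fin Lh) -EFinM /= a2 mulrC ler_pdivrMr // mul1r.
  by rewrite lerDl ltW.
move: (unit_ball _ Lah Iah).
rewrite (I2_ae_eq (SL2 _ Lah).1 (cmeas_scale a (SL2 _ Lh).1) (Sscale a h Lh)).
rewrite I2_scale; last exact: (SL2 _ Lh).1.
rewrite (I2_fin (SL2 _ Lh)) -EFinM /= a2 => hlt.
have : fine (I2 (S h)) < eps ^+ 2 * lam by rewrite -ltr_pdivrMr // mulrC.
by rewrite mulrDr mulrCA mulfV ?gt_eqF // mulr1 => /ltW.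
Qed.

End L2_space.

Arguments L2_0 {dsp X R mu}.

Section bounded_operator.
Context (dsp : measure_display) (X : measurableType dsp) (R : realType)
  (mu : {measure set X -> \bar R}).
Local Notation I2 f := (\int[mu]_y (csq (f y))%:E)%E.
Variable T : (X -> R[i]) -> (X -> R[i]).
Hypothesis hT : is_bounded_op mu T.

Lemma bounded_op_L2 f : L2 mu f -> L2 mu (T f).
Proof. by case: hT => h _ _ _; exact: h. Qed.

Lemma bounded_op_linear (a : R[i]) f g : L2 mu f -> L2 mu g ->
  Defs.ae_eq mu (T (fun x => a * f x + g x)) (fun x => a * T f x + T g x).
Proof. by case: hT => _ _ h _; exact: h. Qed.

Lemma bounded_op0 : Defs.ae_eq mu (T (fun=> 0)) (fun=> 0).
Proof.
have := bounded_op_linear 1 L2_0 L2_0.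
under eq_fun do rewrite mulr0 addr0.
apply: filterS => x; rewrite mul1r => h.
by apply: (addrI (T (fun=> 0) x)); rewrite addr0 -h.
Qed.

Lemma bounded_opZ (a : R[i]) f : L2 mu f ->
  Defs.ae_eq mu (T (fun x => a * f x)) (fun x => a * T f x).
Proof.
move=> Lf; have := bounded_op_linear a Lf L2_0.
under eq_fun do rewrite addr0.
by move=> h; apply: filterS2 h bounded_op0 => x -> ->; rewrite addr0.
Qed.

Lemma bounded_opD f g : L2 mu f -> L2 mu g ->
  Defs.ae_eq mu (T (fun x => f x + g x)) (fun x => T f x + T g x).
Proof.
move=> Lf Lg; have := bounded_op_linear 1 Lf Lg.
by under eq_fun do rewrite mul1r; apply: filterS => x ->; rewrite mul1r.
Qed.

Lemma I2_ind_op_le (C : set X) (eps : R) : measurable C ->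
  opnorm mu (fun f => ind C (T f)) < eps ->
  forall h, L2 mu h -> fine (I2 (ind C (T h))) <= eps ^+ 2 * fine (I2 h).
Proof.
move=> mC; apply: I2_le_opnorm.
- by move=> f Lf; apply: L2_ind => //; exact: bounded_op_L2.
- case: (hT) => _ _ _ [M hM]; exists `|M| => f Lf f1.
  apply: le_trans (norm2_ind_le mC (bounded_op_L2 Lf)) _.
  apply: le_trans (hM f Lf) _; have := norm2_ge0 mu f; have := ler_norm M.
  by have := normr_ge0 M; move: (norm2 mu f) f1 => n; move: `|M| => m; nra.
- move=> a f Lf; apply: filterS (bounded_opZ (Complex a 0) Lf) => x /= hx.
  by rewrite !indE hx; case: (x \in C); rewrite ?mulr0.
Qed.

End bounded_operator.

Section controlled_operator.
Context (dsp : measure_display) (X : measurableType dsp) (R : realType)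
  (d : X -> X -> R) (mu : {measure set X -> \bar R})
  (hS : standing_assumptions d mu).
Local Notation I2 f := (\int[mu]_y (csq (f y))%:E)%E.
Variables (T : (X -> R[i]) -> (X -> R[i])) (r : R).
Hypothesis hT : is_bounded_op mu T.
Hypothesis hctrl : forall F G : set X, mclosed d F -> mclosed d G ->
  dist_gt d F G r -> forall f, L2 mu f -> Defs.ae_eq mu (ind F (T (ind G f))) (fun=> 0).
Let hd := standing_metric hS.

(* Controlledness applied to [cball d x 1] and [[set y | r + 3/2 <= d x y]],
   which are more than [r] apart. *)
Lemma I2_cball_op_near x f : L2 mu f ->
  I2 (ind (cball d x 1) (T f)) =
  I2 (ind (cball d x 1) (T (ind [set y | d x y < r + 3/2] f))).
Proof.
move=> Lf; set C := cball d x 1; set B := [set y | d x y < r + 3/2].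
set G := [set y | r + 3/2 <= d x y].
have mC : measurable C by exact: cball_measurable hS _ _.
have mB : measurable B by apply: (mopen_measurable hS); exact: mopen_ball.
have mG : measurable G by apply: (mclosed_measurable hS); exact: mclosed_far.
have LB := L2_ind mB Lf; have LG := L2_ind mG Lf.
have f_split : f = (fun y => ind G f y + ind B f y).
  apply/funext => y; rewrite !indE; case: (pselect (r + 3/2 <= d x y)) => h.
    by rewrite (mem_set (h : G y)) memNset ?addr0 //= /B /= ltNge h.
  by rewrite memNset // (mem_set (_ : B y)) ?add0r //= /B /= ltNge; exact/negP.
have dCG : dist_gt d C G r.
  exists (r + 1/2) => [|a b Ca Gb]; first lra.
  by have := dist_triangle hd x a b; rewrite /C /cball /G /= in Ca Gb; lra.
have far0 := hctrl (@mclosed_cball _ _ _ hd x 1) (@mclosed_far _ _ _ hd x _) dCG Lf.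
have TfD := bounded_opD hT LG LB; rewrite -f_split in TfD.
apply: I2_ae_eq; try by apply: cmeas_ind => //; exact: (bounded_op_L2 hT _).1.
apply: filterS2 TfD far0 => y /= TfE; rewrite !indE TfE.
by case: (y \in C) => // ->; rewrite add0r.
Qed.

Lemma I2_cball_op_le x (eps : R) :
  opnorm mu (fun f => ind (cball d x 1) (T f)) < eps -> forall f, L2 mu f ->
  (\int[mu]_z ((\1_(cball d x 1) z)%:E * (csq (T f z))%:E) <=
   (eps ^+ 2)%:E * \int[mu]_z ((\1_(cball d x (r + 2)) z)%:E * (csq (f z))%:E))%E.
Proof.
move=> hop f Lf; set B := [set y | d x y < r + 3/2].
have mC := cball_measurable hS x 1.
have mB : measurable B by apply: (mopen_measurable hS); exact: mopen_ball.
have LB := L2_ind mB Lf.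
rewrite -I2_ind I2_cball_op_near //.
have := I2_ind_op_le hT mC hop LB.
rewrite (I2_fin (L2_ind mC (bounded_op_L2 hT LB))) -lee_fin => /le_trans; apply.
rewrite EFinM -(I2_fin LB); apply: lee_wpmul2l; first by rewrite lee_fin sqr_ge0.
rewrite I2_ind; apply: ge0_le_integral => //.
- by move=> y _; rewrite mule_ge0 // lee_fin ?csq_ge0.
- apply: emeasurable_funM; last exact: measurable_csq Lf.1.
  by apply/measurable_EFinP; exact: measurable_indic.
- apply: emeasurable_funM; last exact: measurable_csq Lf.1.
  by apply/measurable_EFinP; apply: measurable_indic; exact: cball_measurable hS _ _.
move=> y _; apply: lee_wpmul2r; first by rewrite lee_fin csq_ge0.
rewrite lee_fin /indic; case: (boolP (y \in B)) => // /set_mem By.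
by rewrite (mem_set (_ : cball d x (r + 2) y)) //= /cball /=; rewrite /B /= in By; lra.
Qed.

Lemma I2_ind_op_le_local (c M eps : R) (F : set X) f :
  0 <= c -> (forall y, (c%:E <= mu (cball d y (1/2)))%E) ->
  (forall y, (mu (cball d y (r + 2)) <= M%:E)%E) -> measurable F ->
  (forall x y, F y -> d x y <= 1/2 ->
     opnorm mu (fun f => ind (cball d x 1) (T f)) < eps) ->
  L2 mu f -> c * fine (I2 (ind F (T f))) <= eps ^+ 2 * M * fine (I2 f).
Proof.
move=> c0 hc hM mF hloc Lf; have LTf := bounded_op_L2 hT Lf.
have := ball_averaging hS c0 hc hM (sqr_ge0 eps) mF (measurable_csq LTf.1)
  (measurable_csq Lf.1) (fun y => csq_ge0 _ : (0 <= (csq _)%:E)%E)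
  (fun y => csq_ge0 _ : (0 <= (csq _)%:E)%E)
  (fun x y Fy dxy => I2_cball_op_le (hloc x y Fy dxy) Lf).
by rewrite -I2_ind (I2_fin (L2_ind mF LTf)) (I2_fin Lf) -!EFinM lee_fin.
Qed.

End controlled_operator.

Theorem lemma5p4 (dsp : measure_display) (X : measurableType dsp) (R : realType)
  (d : X -> X -> R) (mu : {measure set X -> \bar R}) :
  standing_assumptions d mu ->
  (exists2 c : R, 0 < c & forall x : X, (c%:E <= mu (cball d x (1 / 2)))%E) ->
  forall (T : (X -> R[i]) -> (X -> R[i])) (xi : set_system X),
    in_E mu d T -> controlled_op mu d T -> coarse_filter d xi ->
    (forall e : R, 0 < e ->
       xi [set x | opnorm mu (fun f => ind (cball d x 1) (T f)) < e]) ->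
    in_J mu d xi T.
Proof.
move=> hS [c c0 hc] T xi hE [r r0 hctrl] [_ xi_coarse] hlim.
split=> // e e0; have hT := hE.1.
have r2 : 0 < r + 2 by lra.
have [M M0 hM] := cball_measure_bounded hS r2.
have q0 : 0 < (e / 2) ^+ 2 * c / M by rewrite !mulr_gt0 ?invr_gt0 ?exprn_gt0 //; lra.
pose eps := Num.sqrt ((e / 2) ^+ 2 * c / M).
have eps0 : 0 < eps by rewrite sqrtr_gt0.
have epsM : eps ^+ 2 * M = (e / 2) ^+ 2 * c by rewrite sqr_sqrtr ?ltW // divfK ?gt_eqF.
pose F := inner_nbhd d [set x | opnorm mu (fun f => ind (cball d x 1) (T f)) < eps] 1.
have mF : measurable F by exact/(mopen_measurable hS)/mopen_inner_nbhd/(standing_metric hS).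
exists F; split => //; first exact: xi_coarse _ _ ltr01 (hlim _ eps0).
apply: (@le_lt_trans _ _ (e / 2)); last lra.
apply: opnorm_le => f Lf f1; apply: norm2_le; first lra.
have hloc x y : F y -> d x y <= 1 / 2 -> opnorm mu (fun f => ind (cball d x 1) (T f)) < eps.
  by move=> Fy dxy; apply: (inner_nbhd_cball (standing_metric hS) Fy); lra.
have := I2_ind_op_le_local hS hT hctrl (ltW c0) hc hM mF hloc Lf.
rewrite epsM -(norm2_sq mu f) => hle; rewrite -(ler_pM2l c0).
apply: le_trans hle _; rewrite [c * _]mulrC ler_piMr ?mulr_ge0 ?sqr_ge0 ?(ltW c0) ?(ltW e0) //.
by rewrite expr_le1 ?norm2_ge0.
Qed.
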